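(* Let $d\ge 2$ and let $G$ be a germ. Then every vector $p\in G$ has at most $\frac{d(d-1)}{2}$ entries equal to zero.
   Context: Fix an integer $d\ge 2$. $\langle\cdot,\cdot\rangle$ denotes the standard inner product on $\mathbb{R}^{d^2}$. The probability simplex is $\Delta=\{p\in\mathbb{R}^{d^2}: p(i)\ge 0\ \forall i,\ \sum_i p(i)=1\}$. A subset $A\subseteq\Delta$ is a germ if $\frac{1}{d(d+1)}\le\langle p,s\rangle\le\frac{2}{d(d+1)}$ for all $p,s\in A$ (including $p=s$). *)

From HB Require Import structures.
From mathcomp Require Import all_boot all_order all_algebra.
Set Implicit Arguments. Unset Strict Implicit. Unset Printing Implicit Defensive.
Import Order.TTheory GRing.Theory Num.Theory.
Local Open Scope ring_scope.

Definition vec (R : realFieldType) (d : nat) := {ffun 'I_(d ^ 2) -> R}.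

Definition inner (R : realFieldType) (d : nat) (p s : vec R d) : R :=
  \sum_(i < d ^ 2) p i * s i.

Definition in_simplex (R : realFieldType) (d : nat) (p : vec R d) : Prop :=
  (forall i, 0 <= p i) /\ \sum_(i < d ^ 2) p i = 1.

Definition germ (R : realFieldType) (d : nat) (A : vec R d -> Prop) : Prop :=
  (forall p, A p -> in_simplex p) /\
  (forall p s, A p -> A s ->
     1 / (d * (d + 1))%:R <= inner p s /\ inner p s <= 2 / (d * (d + 1))%:R).

Definition nzeros (R : realFieldType) (d : nat) (p : vec R d) : nat :=
  #|[pred i : 'I_(d ^ 2) | p i == 0]|.

From HB Require Import structures.
From mathcomp Require Import all_boot all_order all_algebra.
From mathcomp Require Import zify ring.
Import Order.TTheory GRing.Theory Num.Theory.
Local Open Scope ring_scope.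

(* If p has k nonzero entries, Cauchy-Schwarz on its support gives
   1 = (sum_i p i)^2 <= k <p,p> <= 2k/(d(d+1)), so k >= d(d+1)/2 and
   p has at most d^2 - d(d+1)/2 = d(d-1)/2 zero entries. *)

Lemma sqr_sum_le_card_mul_sum_sqr {R : realFieldType} {T : finType}
    (P : pred T) (f : T -> R) :
  (\sum_(i | P i) f i) ^+ 2 <= #|P|%:R * \sum_(i | P i) f i ^+ 2.
Proof.
set S := \sum_(i | P i) f i; set Q := \sum_(i | P i) f i ^+ 2; set k := #|P|%:R.
have [card0 | card_pos] := posnP #|P|.
  have P0 : P =1 pred0 by exact/card0_eq.
  by rewrite /S /Q /k card0 !big_pred0 // expr0n mul0r.
(* Expanding the nonnegative sum of squares (k f i - S)^2 yields k (k Q - S^2). *)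
have expand : \sum_(i | P i) (k * f i - S) ^+ 2 = k * (k * Q - S ^+ 2).
  transitivity (\sum_(i | P i) (k ^+ 2 * f i ^+ 2 - (k * S *+ 2) * f i + S ^+ 2)).
    by apply: eq_bigr => i _; ring.
  by rewrite big_split sumrB /= -!mulr_sumr sumr_const -mulr_natl -/S -/Q; ring.
have : 0 <= k * (k * Q - S ^+ 2) by rewrite -expand sumr_ge0 // => i _; exact: sqr_ge0.
by rewrite pmulr_rge0 ?ltr0n // subr_ge0.
Qed.

Section ZeroEntries.

Context {R : realFieldType} {d : nat}.

Definition nsupport (p : vec R d) : nat := #|[pred i : 'I_(d ^ 2) | p i != 0]|.

Lemma nzeros_add_nsupport (p : vec R d) : (nzeros p + nsupport p)%N = (d ^ 2)%N.
Proof.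
rewrite -(card_ord (d ^ 2)) -(cardC [pred i | p i == 0]).
by congr (_ + _)%N; apply: eq_card => i; rewrite !inE.
Qed.

Lemma sum_on_support (p : vec R d) (F : R -> R) : F 0 = 0 ->
  \sum_(i | p i != 0) F (p i) = \sum_(i < d ^ 2) F (p i).
Proof. by move=> F0; rewrite big_rmcond // => i /negPn /eqP ->. Qed.

Lemma simplex_inner_self_ge (p : vec R d) :
  in_simplex p -> 1 <= (nsupport p)%:R * inner p p.
Proof.
case=> _ sum1; rewrite /inner.
have := sqr_sum_le_card_mul_sum_sqr (fun i : 'I_(d ^ 2) => p i != 0) p.
rewrite (sum_on_support p id) // (sum_on_support p (fun x => x ^+ 2)) ?expr0n //.
by rewrite sum1 expr1n; under eq_bigr do rewrite expr2.
Qed.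

Lemma germ_nsupport_ge (G : vec R d -> Prop) (p : vec R d) : (0 < d)%N ->
  germ G -> G p -> (d * (d + 1) <= 2 * nsupport p)%N.
Proof.
move=> d_gt0 [simplexG innerG] Gp; have [_ inner_le] := innerG p p Gp Gp.
have D_gt0 : 0 < (d * (d + 1))%:R :> R by rewrite ltr0n muln_gt0 d_gt0 addn1.
have : 1 <= (nsupport p)%:R * (2 / (d * (d + 1))%:R) :> R.
  apply: le_trans (simplex_inner_self_ge p (simplexG p Gp)) _.
  by rewrite ler_wpM2l.
by rewrite mulrA ler_pdivlMr // mul1r mulrC -natrM ler_nat.
Qed.

End ZeroEntries.

Theorem mainTheorem2 (R : realFieldType) (d : nat) (hd : (2 <= d)%N)
  (G : vec R d -> Prop) (hG : germ G) (p : vec R d) (hp : G p) :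
  (nzeros p <= (d * (d - 1)) %/ 2)%N.
Proof.
have support_ge := germ_nsupport_ge G p (ltnW hd) hG hp.
have zeros_eq := nzeros_add_nsupport p.
by rewrite leq_divRL //; nia.
Qed.
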